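(* Let $k,m\in\mathbb{N}$ with $k>m$, $k$ even, $\frac{2k+1}{4m}<1$ and $\gcd(4m,2k+1)=1$. For $s=0,\dots,4m-1$ and $n=0,\dots,2k$ put $\widetilde X_{sn}=\frac{s}{4m}-\frac{n}{2k+1}$ and $\widetilde\Phi_{sn}(0,0)=\sum_{l\in\mathbb{Z}}Q_2\big(2(l+\widetilde X_{sn})\big)$ with $Q_2(x)=(1-|x|)\chi_{[-1,1]}(x)$. Let $\widetilde A$ be the $(2m-1)\times k$ matrix with entries $\widetilde A_{sn}=\widetilde\Phi_{sn}(0,0)-\widetilde\Phi_{s,2k+1-n}(0,0)$, $s=1,\dots,2m-1$, $n=1,\dots,k$. Then $\operatorname{rank}(\widetilde A)\le k-1$.
   Context: This corresponds to the Gabor system of $Q_2$ with $a=\frac{1}{2m}$, $b=\frac{2k+1}{2}$, $ab=\frac{2k+1}{4m}$. *)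

From HB Require Import structures.
From mathcomp Require Import all_boot all_order all_algebra.
From mathcomp Require Import all_classical all_reals all_analysis.
Set Implicit Arguments. Unset Strict Implicit. Unset Printing Implicit Defensive.
Import Order.TTheory GRing.Theory Num.Theory.
Local Open Scope ring_scope.

Definition Q2 (R : realType) (x : R) : R :=
  if `|x| <= 1 then 1 - `|x| else 0.

Definition sumZ (R : realType) (f : int -> R) : R :=
  limn (fun N : nat => \sum_(i < (2 * N).+1) f (i%:Z - N%:Z)%R).

Definition Xt (R : realType) (k m s n : nat) : R :=
  s%:R / (4 * m)%:R - n%:R / (2 * k + 1)%:R.

Definition Phit (R : realType) (k m s n : nat) : R :=
  sumZ (fun l : int => @Q2 R (2 * (l%:~R + @Xt R k m s n))).

(* tilde A_{sn} = Phi_{sn} - Phi_{s,2k+1-n}, s = 1..2m-1, n = 1..k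
   (row index i : 'I_(2m-1) stands for s = i+1, column j : 'I_k for n = j+1) *)
Definition At (R : realType) (k m : nat) : 'M[R]_((2 * m).-1, k) :=
  \matrix_(i < (2 * m).-1, j < k)
     (@Phit R k m i.+1 j.+1 - @Phit R k m i.+1 ((2 * k).+1 - j.+1)).

From HB Require Import structures.
From mathcomp Require Import all_boot all_order all_algebra.
From mathcomp Require Import all_classical all_reals all_analysis.
From mathcomp Require Import zify ring lra.
Import Order.TTheory GRing.Theory Num.Theory.
Local Open Scope ring_scope.

(* Phit R k m s n is the value at Xt R k m s n of the 1-periodic triangle wave
   P(X) = sum_l Q2(2(l + X)), which is even and satisfies P(t) + P(t + 1/2) = 1.
   With y = s/(4m) and x = n/(2k+1), replacing s by 2m - s replaces y by 1/2 - y,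
   and these two identities show that the entry P(y - x) - P(y + x - 1) is
   unchanged.  So row s of At equals row 2m - s, the matrix has at most m
   distinct rows, and its rank is at most m <= k - 1. *)

Section SymmetricSums.
Variable R : realType.
Implicit Types f : int -> R.

Definition psumZ f N := \sum_(i < (2 * N).+1) f (i%:Z - N%:Z).

Lemma sumZ_reflect f : sumZ (fun l => f (- l)) = sumZ f.
Proof.
rewrite /sumZ -/(psumZ _) -/(psumZ _); do 2 f_equal; apply/funext => N.
rewrite /psumZ (reindex_inj rev_ord_inj); apply: eq_bigr => i _ /=.
by congr f; have := ltn_ord i; lia.
Qed.

Lemma psumZS f N : psumZ f N.+1 = psumZ f N + f (- (N.+1)%:Z) + f (N.+1)%:Z.
Proof.
rewrite /psumZ mulnSr addn2 big_ord_recr big_ord_recl /=.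
congr (_ + _); last by congr f; lia.
rewrite addrC sub0r; congr (_ + _); apply: eq_bigr => i _ /=.
by congr f; rewrite /bump /= add1n; lia.
Qed.

Lemma sumZ_finite_support f (M : nat) :
  (forall l : int, (M < `|l|)%N -> f l = 0) -> sumZ f = psumZ f M.
Proof.
move=> f0; have psumZ_const N : psumZ f (M + N) = psumZ f M.
  elim: N => [|N IH]; first by rewrite addn0.
  by rewrite addnS psumZS IH !f0 ?addr0 //=; lia.
apply: (lim_near_cst (@norm_hausdorff _ _)); exists M => // N /= leMN.
by have := psumZ_const (N - M)%N; rewrite subnKC.
Qed.

End SymmetricSums.

Section Periodization.
Variable R : realType.
Implicit Types x X t : R.

Lemma Q2N x : Q2 (- x) = Q2 x.
Proof. by rewrite /Q2 normrN. Qed.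

Lemma Q2_out x : 1 <= `|x| -> Q2 x = 0.
Proof. by move=> h; rewrite /Q2; case: ifP => // h'; lra. Qed.

Lemma Q2_in x : `|x| <= 1 -> Q2 x = 1 - `|x|.
Proof. by rewrite /Q2 => ->. Qed.

Definition perQ2 X := sumZ (fun l : int => Q2 (2 * (l%:~R + X))).

Lemma perQ2N X : perQ2 (- X) = perQ2 X.
Proof.
rewrite /perQ2 -sumZ_reflect; congr sumZ; apply/funext => l.
by rewrite -Q2N mulrNz -opprD mulrN opprK.
Qed.

Lemma perQ2_three X : `|X| < 3/2 ->
  perQ2 X = Q2 (2 * (X - 1)) + Q2 (2 * X) + Q2 (2 * (X + 1)).
Proof.
move=> hX; rewrite /perQ2 (@sumZ_finite_support _ _ 1).
  rewrite /psumZ !big_ord_recr big_ord0 /= add0r.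
  by congr (Q2 (2 * _) + Q2 (2 * _) + Q2 (2 * _)); rewrite addrC // subrr addr0.
move=> l hl; apply: Q2_out.
have l2 : 2 <= `|(l%:~R : R)|.
  by rewrite -intr_norm (_ : 2 = 2%:~R) // ler_int; lia.
have := lerB_normD (l%:~R : R) X.
rewrite normrM ger0_norm //; lra.
Qed.

Lemma perQ2_low X : 0 <= X <= 1/2 -> perQ2 X = 1 - 2 * X.
Proof.
move=> /andP[X0 X1]; rewrite perQ2_three; last by rewrite ger0_norm; lra.
rewrite Q2_out; last by rewrite ler0_norm; lra.
rewrite (Q2_out (2 * (X + 1))); last by rewrite ger0_norm; lra.
by rewrite Q2_in ger0_norm; lra.
Qed.

Lemma perQ2_high X : 1/2 <= X <= 1 -> perQ2 X = 2 * X - 1.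
Proof.
move=> /andP[X0 X1]; rewrite perQ2_three; last by rewrite ger0_norm; lra.
rewrite (Q2_out (2 * X)); last by rewrite ger0_norm; lra.
rewrite (Q2_out (2 * (X + 1))); last by rewrite ger0_norm; lra.
by rewrite Q2_in ler0_norm; lra.
Qed.

Lemma perQ2_add_half t : -1 <= t <= 1/2 -> perQ2 t + perQ2 (t + 1/2) = 1.
Proof.
move=> /andP[t0 t1].
case: (lerP t (-(1/2))) => [ta|/ltW ta]; last case: (lerP t 0) => [tb|/ltW tb].
- rewrite -[perQ2 t]perQ2N -[perQ2 (t + _)]perQ2N perQ2_high ?perQ2_low; lra.
- rewrite -[perQ2 t]perQ2N !perQ2_low; lra.
- rewrite perQ2_low ?perQ2_high; lra.
Qed.

Lemma perQ2_diff_reflect x y : 0 <= x <= 1/2 -> 0 <= y <= 1/2 ->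
  perQ2 (y - x) - perQ2 (y - (1 - x)) =
  perQ2 (1/2 - y - x) - perQ2 (1/2 - y - (1 - x)).
Proof.
move=> /andP[x0 x1] /andP[y0 y1].
have := @perQ2_add_half (y - x); have := @perQ2_add_half (y - (1 - x)).
rewrite -[perQ2 (1/2 - y - x)]perQ2N -[perQ2 (1/2 - y - (1 - x))]perQ2N.
have -> : - (1/2 - y - x) = y - (1 - x) + 1/2 by lra.
have -> : - (1/2 - y - (1 - x)) = y - x + 1/2 by lra.
lra.
Qed.


Lemma ratio_half_bounds (a d : nat) :
  (2 * a <= d)%N -> 0 <= (a%:R / d%:R : R) <= 1/2.
Proof.
move=> ad; have [->|d0] := posnP d; first by rewrite invr0 mulr0 lexx; lra.
rewrite divr_ge0 ?ler0n //= ler_pdivrMr ?ltr0n //.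
have : (2 * a)%:R <= d%:R :> R by rewrite ler_nat.
rewrite natrM; lra.
Qed.

Lemma Phit_diff_reflect (k m s n : nat) :
  (0 < m)%N -> (s <= 2 * m)%N -> (n <= k)%N ->
  Phit R k m s n - Phit R k m s ((2 * k).+1 - n) =
  Phit R k m (2 * m - s) n - Phit R k m (2 * m - s) ((2 * k).+1 - n).
Proof.
move=> m0 s2m nk.
have PhitE s' n' : Phit R k m s' n' = perQ2 (Xt R k m s' n') by [].
have reflect_s : (2 * m - s)%:R / (4 * m)%:R = 1/2 - s%:R / (4 * m)%:R :> R.
  by rewrite natrB // mulrBl !natrM; field; rewrite pnatr_eq0 -lt0n.
have reflect_n : ((2 * k).+1 - n)%:R / (2 * k + 1)%:R =
                 1 - n%:R / (2 * k + 1)%:R :> R.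
  rewrite (_ : (2 * k).+1 = 2 * k + 1)%N ?natrB ?mulrBl ?divff ?pnatr_eq0 //; lia.
rewrite !PhitE /Xt !reflect_n reflect_s perQ2_diff_reflect //.
  by apply: ratio_half_bounds; lia.
by apply: ratio_half_bounds; lia.
Qed.

End Periodization.

Definition palindromic_rows {T : Type} {r n : nat} (A : 'M[T]_(r, n)) :=
  forall i, row (rev_ord i) A = row i A.

Lemma mxrank_palindromic_rows {F : fieldType} {r n : nat} (A : 'M[F]_(r, n)) :
  palindromic_rows A -> (\rank A <= uphalf r)%N.
Proof.
rewrite /palindromic_rows => Arev.
have half_le : (uphalf r <= r)%N by rewrite uphalf_half; lia.
have fold_lt (i : 'I_r) : (minn i (rev_ord i) < uphalf r)%N.
  by have := ltn_ord i; rewrite /= uphalf_half; lia.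
pose fold i := Ordinal (fold_lt i).
have -> : A = rowsub (widen_ord half_le \o fold) A.
  apply/row_matrixP => i; rewrite row_rowsub.
  have [le_i_rev|/ltnW le_rev_i] := leqP i (rev_ord i).
    by congr row; apply: val_inj; rewrite /= (minn_idPl le_i_rev).
  by rewrite -Arev; congr row; apply: val_inj; rewrite /= (minn_idPr le_rev_i).
exact: leq_trans (mxrankS (rowsub_comp_sub _ _ _)) (rank_leq_row _).
Qed.

Lemma At_palindromic_rows (R : realType) (k m : nat) :
  palindromic_rows (At R k m).
Proof.
rewrite /palindromic_rows => i; apply/rowP => j.
have := ltn_ord i; have := ltn_ord j; rewrite !mxE /= => jk i2m.
have -> : ((2 * m).-1 - i.+1).+1 = (2 * m - i.+1)%N by lia.
by rewrite -Phit_diff_reflect //; lia.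
Qed.

Local Close Scope ring_scope.

Theorem lemma3p17 (R : realType) (k m : nat)
  (hkm : (m < k)%N) (hk : ~~ odd k)
  (hab : ((2 * k + 1)%:R / (4 * m)%:R < 1 :> R)%R)
  (hmpos : (0 < m)%N)
  (hgcd : gcdn (4 * m) (2 * k + 1) = 1%N) :
  (\rank (At R k m) <= k.-1)%N.
Proof.
have := mxrank_palindromic_rows _ (At_palindromic_rows R k m).
by rewrite uphalf_half; lia.
Qed.
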